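(* Let $H$ be a set with a metric $d$ and $r\ge3$ an integer. Let $\mathcal{Q}$ be a partition of $[r]=\{1,\dots,r\}$ with $|\mathcal{Q}|\ge2$, fix $0\le\alpha<\beta$, and suppose $\underline h\in H^r$ satisfies $d^{\mathcal{Q}}(\underline h)\le\alpha$ and $d_{\mathcal{Q}}(\underline h)\le\beta$. Then there exists a partition $\mathcal{R}$ of $[r]$, strictly coarser than $\mathcal{Q}$, such that $d^{\mathcal{R}}(\underline h)<3\beta$.
   Context: For $\underline h=(h_1,\dots,h_r)\in H^r$ and $I,J\subset[r]$: $d^I(\underline h)=\max\{d(h_i,h_j):i,j\in I\}$, $d_{I,J}(\underline h)=\min\{d(h_i,h_j):i\in I,j\in J\}$. For a partition $\mathcal{Q}$: $d^{\mathcal{Q}}(\underline h)=\max_{I\in\mathcal{Q}}d^I(\underline h)$, $d_{\mathcal{Q}}(\underline h)=\min\{d_{I,J}(\underline h):I\ne J,\ I,J\in\mathcal{Q}\}$. A partition $\mathcal{R}$ is strictly coarser than $\mathcal{Q}$ if every block of $\mathcal{R}$ is a union of blocks of $\mathcal{Q}$ and $\mathcal{R}$ has fewer blocks than $\mathcal{Q}$. *)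

From HB Require Import structures.
From mathcomp Require Import all_boot all_order all_algebra.
From mathcomp Require Import reals constructive_ereal.
Set Implicit Arguments. Unset Strict Implicit. Unset Printing Implicit Defensive.
Import Order.TTheory GRing.Theory Num.Theory.
Local Open Scope ring_scope.

Definition is_metric (R : realType) (H : Type) (d : H -> H -> R) : Prop :=
  [/\ forall x y, d x y = 0 <-> x = y,
      forall x y, d x y = d y x &
      forall x y z, d x z <= d x y + d y z].

(* d^I(h) = max { d(h_i,h_j) : i,j in I }  (0 for empty I; distances are >= 0) *)
Definition diam (R : realType) (H : Type) (d : H -> H -> R) (r : nat)
  (h : 'I_r -> H) (I : {set 'I_r}) : R :=
  \big[Num.max/0]_(i in I) \big[Num.max/0]_(j in I) d (h i) (h j).

Definition sep (R : realType) (H : Type) (d : H -> H -> R) (r : nat)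
  (h : 'I_r -> H) (I J : {set 'I_r}) : \bar R :=
  \big[Order.min/+oo%E]_(i in I) \big[Order.min/+oo%E]_(j in J) ((d (h i) (h j))%:E).

Definition diamP (R : realType) (H : Type) (d : H -> H -> R) (r : nat)
  (h : 'I_r -> H) (Q : {set {set 'I_r}}) : R :=
  \big[Num.max/0]_(I in Q) diam d h I.

Definition sepP (R : realType) (H : Type) (d : H -> H -> R) (r : nat)
  (h : 'I_r -> H) (Q : {set {set 'I_r}}) : \bar R :=
  \big[Order.min/+oo%E]_(I in Q) \big[Order.min/+oo%E]_(J in Q | I != J) sep d h I J.

Definition strictly_coarser (r : nat) (Rp Q : {set {set 'I_r}}) : Prop :=
  (forall B, B \in Rp -> B = \bigcup_(A in Q | A \subset B) A) /\ (#|Rp| < #|Q|)%N.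

From HB Require Import structures.
From mathcomp Require Import all_boot all_order all_algebra.
From mathcomp Require Import reals constructive_ereal.
From mathcomp Require Import lra.
Set Implicit Arguments. Unset Strict Implicit. Unset Printing Implicit Defensive.
Import Order.TTheory GRing.Theory Num.Theory.
Local Open Scope ring_scope.

(* Since d_Q <= beta, two distinct blocks I and J contain points h_i, h_j at
   distance at most beta.  Merging I and J gives a strictly coarser partition,
   and by the triangle inequality through h_i and h_j the merged block has
   diameter at most alpha + beta + alpha < 3 beta, while every other block
   keeps diameter at most alpha. *)

Section MergeBlocks.
Variable T : finType.
Implicit Types (P : {set {set T}}) (D I J : {set T}).

Definition merge_blocks P I J : {set {set T}} := (I :|: J) |: (P :\ I :\ J).

Lemma partition_merge_blocks P D I J :
  partition P D -> I \in P -> J \in P -> I != J ->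
  partition (merge_blocks P I J) D.
Proof.
move=> partP IP JP neqIJ.
have JPI : J \in P :\ I by rewrite in_setD1 eq_sym neqIJ.
have partPIJ := partitionD1 (partitionD1 partP IP) JPI.
have subIJ : I :|: J \subset D by rewrite subUset !(partitionS partP).
have IJ0 : I :|: J != set0 by rewrite setU_eq0 negb_and (partition_neq0 partP IP).
have disIJ : [disjoint I :|: J & D :\: I :\: J].
  by rewrite setDDl -setI_eq0 setDE setICA setICr setI0.
have := partitionU1 partPIJ IJ0 disIJ.
suff -> : (I :|: J) :|: (D :\: I :\: J) = D by [].
by rewrite setDDl -{1}(setIidPr subIJ) setID.
Qed.

Lemma merge_blocks_refines P I J B :
  I \in P -> J \in P -> B \in merge_blocks P I J ->
  B = \bigcup_(A in P | A \subset B) A.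
Proof.
move=> IP JP BM; apply/eqP; rewrite eqEsubset; apply/andP; split; last first.
  by apply/bigcupsP => A /andP[].
move: BM; rewrite !inE => /predU1P[-> | /and3P[_ _ BP]]; last first.
  by apply: (bigcup_sup B); rewrite BP subxx.
by rewrite subUset (bigcup_sup I) ?(bigcup_sup J) ?subsetUl ?subsetUr ?IP ?JP.
Qed.

Lemma card_merge_blocks P I J :
  I \in P -> J \in P -> I != J -> (#|merge_blocks P I J| < #|P|)%N.
Proof.
move=> IP JP neqIJ.
have JPI : J \in P :\ I by rewrite in_setD1 eq_sym neqIJ.
rewrite /merge_blocks (cardsD1 I P) (cardsD1 J (P :\ I)) IP JPI cardsU1 /=.
by case: (_ \notin _).
Qed.

End MergeBlocks.

Section Diameters.
Variables (R : realType) (H : Type) (d : H -> H -> R).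

Hypothesis hd : is_metric d.

Lemma metric_ge0 x y : 0 <= d x y.
Proof.
case: hd => dxx dsym dtri.
have := dtri x y x; have := dsym y x; have := proj2 (dxx x x) erefl; lra.
Qed.

Variables (r : nat) (h : 'I_r -> H).
Implicit Types (Q : {set {set 'I_r}}) (I J : {set 'I_r}).

Lemma le_diamP Q I i j :
  I \in Q -> i \in I -> j \in I -> d (h i) (h j) <= diamP d h Q.
Proof.
move=> IQ iI jI; apply: le_trans (le_bigmax_cond _ _ IQ).
apply: le_trans (le_bigmax_cond _ _ iI).
exact: le_bigmax_cond.
Qed.

Lemma diamP_le Q (c : R) :
  0 <= c ->
  (forall I i j, I \in Q -> i \in I -> j \in I -> d (h i) (h j) <= c) ->
  diamP d h Q <= c.
Proof.
move=> c0 le_c; apply: bigmax_le => // I IQ.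
apply: bigmax_le => // i iI; apply: bigmax_le => // j jI.
exact: (le_c I i j IQ iI jI).
Qed.

Lemma lt_sepP Q b :
  (forall I J i j, I \in Q -> J \in Q -> I != J -> i \in I -> j \in J ->
     b < d (h i) (h j)) ->
  (b%:E < sepP d h Q)%E.
Proof.
move=> lt_b; apply/bigmin_gtP; split=> [|I IQ]; first exact: ltry.
apply/bigmin_gtP; split=> [|J /andP[JQ neqIJ]]; first exact: ltry.
apply/bigmin_gtP; split=> [|i iI]; first exact: ltry.
apply/bigmin_gtP; split=> [|j jJ]; first exact: ltry.
by rewrite lte_fin; apply: (lt_b I J).
Qed.

Lemma sepP_le_witness Q b :
  (sepP d h Q <= b%:E)%E ->
  exists I J, [/\ I \in Q, J \in Q, I != J &
                exists i j, [/\ i \in I, j \in J & d (h i) (h j) <= b]].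
Proof.
move=> le_sep_b.
have : [exists I in Q, exists J in Q, (I != J) &&
          [exists i in I, exists j in J, d (h i) (h j) <= b]].
  apply: contraLR le_sep_b => /exists_inPn no_pair; rewrite -ltNge.
  apply: lt_sepP => I J i j IQ JQ neqIJ iI jJ; rewrite ltNge.
  apply: contra (no_pair I IQ) => le_dij.
  apply/exists_inP; exists J; rewrite // neqIJ.
  by apply/exists_inP; exists i => //; apply/exists_inP; exists j.
move=> /exists_inP[I IQ /exists_inP[J JQ /andP[neqIJ]]].
move=> /exists_inP[i iI /exists_inP[j jJ le_dij]].
by exists I, J; split=> //; exists i, j.
Qed.

Lemma diamP_merge_blocks_le Q I J i j a b :
  diamP d h Q <= a -> I \in Q -> J \in Q -> i \in I -> j \in J ->
  d (h i) (h j) <= b ->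
  diamP d h (merge_blocks Q I J) <= a + b + a.
Proof.
case: (hd) => _ dsym dtri.
move=> le_a IQ JQ iI jJ le_b.
have le_block K x y : K \in Q -> x \in K -> y \in K -> d (h x) (h y) <= a.
  by move=> KQ xK yK; apply: le_trans le_a; apply: le_diamP KQ xK yK.
have a0 : 0 <= a := le_trans (metric_ge0 _ _) (le_block _ _ _ IQ iI iI).
have b0 : 0 <= b := le_trans (metric_ge0 _ _) le_b.
have le_cross x y : x \in I -> y \in J -> d (h x) (h y) <= a + b + a.
  move=> xI yJ; have := dtri (h x) (h i) (h y); have := dtri (h i) (h j) (h y).
  have := le_block _ _ _ IQ xI iI; have := le_block _ _ _ JQ jJ yJ; lra.
apply: diamP_le => [|K x y]; first lra.
rewrite !inE => /predU1P[-> | /and3P[_ _ KQ]] xK yK; last first.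
  by have := le_block _ _ _ KQ xK yK; lra.
move: xK yK; rewrite !inE => /orP[xI|xJ] /orP[yI|yJ].
- by have := le_block _ _ _ IQ xI yI; lra.
- exact: le_cross.
- by rewrite dsym; apply: le_cross.
- by have := le_block _ _ _ JQ xJ yJ; lra.
Qed.

End Diameters.

Theorem lemma10p1 (R : realType) (H : Type) (d : H -> H -> R)
  (hd : is_metric d) (r : nat) (hr : (3 <= r)%N)
  (Q : {set {set 'I_r}}) (hQ : partition Q [set: 'I_r]) (hQ2 : (2 <= #|Q|)%N)
  (alpha beta : R) (ha : 0 <= alpha) (hab : alpha < beta)
  (h : 'I_r -> H)
  (h1 : diamP d h Q <= alpha) (h2 : (sepP d h Q <= beta%:E)%E) :
  exists Rp : {set {set 'I_r}},
    [/\ partition Rp [set: 'I_r], strictly_coarser Rp Q & diamP d h Rp < 3 * beta].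
Proof.
have [I [J [IQ JQ neqIJ [i [j [iI jJ le_dij]]]]]] := sepP_le_witness h2.
exists (merge_blocks Q I J); split.
- exact: partition_merge_blocks.
- by split=> [B|]; [apply: merge_blocks_refines | apply: card_merge_blocks].
- have := diamP_merge_blocks_le hd h1 IQ JQ iI jJ le_dij; lra.
Qed.
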